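(* For each fixed $k\geq 3$, $$AW(k;r)\leq \frac{2^{k-2}}{(k-1)!}\,r^{k-1}\,(1+o(1))\quad\text{as } r\to\infty.$$
   Context: A sequence of positive integers $w_1<\dots<w_n$ is an ascending wave if $w_{i+1}-w_i \geq w_i-w_{i-1}$ for $2\le i\le n-1$. For positive integers $k,r$, $AW(k;r)$ denotes the least positive integer $N$ such that every $r$-coloring of $\{1,\dots,N\}$ contains a $k$-term monochromatic ascending wave. *)

From HB Require Import structures.
From mathcomp Require Import all_boot all_order all_algebra.
From mathcomp Require Import reals.
Set Implicit Arguments. Unset Strict Implicit. Unset Printing Implicit Defensive.

Definition ascending_wave (k : nat) (w : nat -> nat) : Prop :=
  [/\ 0 < w 0,
      (forall i, i.+1 < k -> w i < w i.+1) &
      (forall i, i.+2 < k -> w i.+1 - w i <= w i.+2 - w i.+1)].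

(* Every r-coloring c of {1,...,N} contains a k-term monochromatic ascending
   wave (all terms in {1,...,N}). The coloring is given on all of nat but only
   its values on {1,...,N} matter. *)
Definition AW_property (k r N : nat) : Prop :=
  forall c : nat -> 'I_r,
    exists w : nat -> nat,
      [/\ ascending_wave k w,
          (forall i, i < k -> w i <= N) &
          (forall i, i < k -> c (w i) = c (w 0))].

(* AW(k;r) <= x  (AW(k;r) is the least positive N with AW_property k r N) *)
Definition AW_le {R : realType} (k r : nat) (x : R) : Prop :=
  exists N : nat, [/\ 0 < N, AW_property k r N & (N%:R <= x)%R].

From HB Require Import structures.
From mathcomp Require Import all_boot all_order all_algebra.
From mathcomp Require Import reals zify ring.
Import Order.TTheory GRing.Theory Num.Theory.

(* Let b be the largest element of a set of integers in [1, 2^e] and group the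
   other elements x by the dyadic scale trunc_log 2 (b - x), which takes fewer
   than e values.  Two elements x < y of the same scale satisfy y - x < b - y,
   so an ascending wave inside one scale remains a wave when b is appended.
   By induction, about e^(k-1) elements of [1, 2^e] force a k-term ascending
   wave, and by pigeonhole some colour class of an r-colouring of [1, 2^e] is
   that large as soon as r e^(k-1) < 2^e.  Taking e = log2 r + O(log log r)
   gives AW(k;r) <= 2^e <= r^(k-1)/(k-1)!, which is below the claimed bound. *)

Set Implicit Arguments.
Unset Strict Implicit.
Unset Printing Implicit Defensive.

Lemma count_sum_fibers (T : eqType) (P : pred T) (f : T -> nat) m (s : seq T) :
  {in s, forall x, f x < m} ->
  count P s = \sum_(t < m) count [pred x | P x && (f x == t)] s.
Proof.
elim: s => [|x s IHs] fs /=; first by rewrite big1.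
rewrite big_split /= -IHs => [|y sy]; last by rewrite fs // inE sy orbT.
congr (_ + _); have fx : f x < m by rewrite fs // inE eqxx.
case: (P x) => /=; last by rewrite big1.
rewrite (bigD1 (Ordinal fx)) //= eqxx big1 // => t.
by case: (f x =P t) => // fxt /negP[]; apply/eqP/val_inj.
Qed.

Lemma sum_pigeonhole m F (c : 'I_m -> nat) :
  m * F < \sum_(t < m) c t -> exists t, F <= c t.
Proof.
move=> ltmF; apply/existsP; apply: contraLR ltmF => /existsPn ltcF.
rewrite -leqNgt -[m in m * F]card_ord -sum_nat_const.
by apply: leq_sum => t _; rewrite ltnW // ltnNge ltcF.
Qed.

Lemma count_fiber_pigeonhole (T : eqType) (P : pred T) (f : T -> nat) m F
    (s : seq T) :
  {in s, forall x, f x < m} -> m * F < count P s ->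
  exists2 t, t < m & F <= count [pred x | P x && (f x == t)] s.
Proof.
move=> fs; rewrite (count_sum_fibers P fs) => /sum_pigeonhole[t Ft].
by exists t.
Qed.

Definition wave_in (k n : nat) (P : pred nat) : Prop :=
  exists w, [/\ ascending_wave k w, forall i, i < k -> w i <= n
              & forall i, i < k -> P (w i)].

Lemma wave_in_widen k n m P : n <= m -> wave_in k n P -> wave_in k m P.
Proof.
move=> lenm [w [wave wn wP]]; exists w; split=> // i ik.
exact: leq_trans (wn i ik) lenm.
Qed.

Lemma ascending_wave_snoc j w b :
  ascending_wave j.+1 w -> w j < b -> (0 < j -> w j - w j.-1 <= b - w j) ->
  ascending_wave j.+2 (fun i => if i <= j then w i else b).
Proof.
case=> w0 w_incr w_conv wjb last_gap; split=> [//|i|i] /[!ltnS] ij.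
  rewrite ij; have [ij1|] := ltnP i j; first exact: w_incr.
  by move=> ji; have -> : i = j by apply/eqP; rewrite eqn_leq ij ji.
rewrite ij (ltnW ij); have [ij2|ji] := ltnP i.+1 j; first exact: w_conv.
have -> : i = j.-1 by lia.
by rewrite prednK ?last_gap //; lia.
Qed.

Lemma trunc_log_lt_pow p m e : 1 < p -> 0 < m -> m < p ^ e -> trunc_log p m < e.
Proof.
move=> p_gt1 m_gt0 m_lt; rewrite ltnNge; apply: contraTN m_lt => le_e.
by rewrite -leqNgt (leq_trans _ (trunc_logP p_gt1 m_gt0)) // leq_pexp2l // ltnW.
Qed.

Lemma trunc_log2_gap x y b :
  x < y < b -> trunc_log 2 (b - x) = trunc_log 2 (b - y) -> y - x < b - y.
Proof.
case/andP=> xy yb same_scale.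
have lo : 2 ^ trunc_log 2 (b - y) <= b - y by apply: trunc_logP; lia.
have := @trunc_log_ltn 2 (b - x) isT; rewrite same_scale expnS; lia.
Qed.

Lemma wave_in_snoc j n t (P : pred nat) :
  P n.+1 -> wave_in j.+1 n [pred x | P x && (trunc_log 2 (n.+1 - x) == t)] ->
  wave_in j.+2 n.+1 P.
Proof.
move=> Pb [w [wave wn wP]].
have wjb : w j < n.+1 by rewrite ltnS wn.
have scale i : i <= j -> trunc_log 2 (n.+1 - w i) = t.
  by move=> ij; have /andP[_ /eqP] := wP i ij.
exists (fun i => if i <= j then w i else n.+1); split.
- apply: ascending_wave_snoc => // j0; apply/ltnW/trunc_log2_gap.
    case: wave => _ w_incr _; rewrite wjb andbT.
    by have := w_incr j.-1; rewrite prednK //; apply.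
  by rewrite !scale // leq_pred.
- by move=> i _; case: ifP => // ij; rewrite (leq_trans (wn i ij)).
- by move=> i _; case: ifP => // ij; have /andP[] := wP i ij.
Qed.

Fixpoint wave_threshold (j e : nat) : nat :=
  if j is j'.+1 then e * wave_threshold j' e + 2 else 1.

Lemma wave_threshold_gt0 j e : 0 < wave_threshold j e.
Proof. by case: j => //= j; rewrite addn2. Qed.

Lemma wave_threshold_le j e : wave_threshold j e <= (e + 2) ^ j.
Proof.
elim: j => [//|j IHj] /=; rewrite expnS.
have : 0 < (e + 2) ^ j by rewrite expn_gt0 addn_gt0 orbT.
move: IHj; set X := (e + 2) ^ j; nia.
Qed.

Lemma wave_in_of_count j e (P : pred nat) n :
  n <= 2 ^ e -> wave_threshold j e <= count P (iota 1 n) -> wave_in j.+1 n P.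
Proof.
elim: j P n => [|j IHj] P n.
  move=> _; rewrite -has_count => /hasP[x]; rewrite mem_iota => /andP[x_gt0 xn] Px.
  by exists (fun=> x).
elim: n => [|n IHn] n_le; first by rewrite leqNgt wave_threshold_gt0.
rewrite -[X in iota _ X]addn1 iotaD count_cat /= addn0 add1n.
case Pb: (P n.+1) => /= count_ge; last first.
  rewrite addn0 in count_ge.
  exact: wave_in_widen (leqnSn n) (IHn (ltnW n_le) count_ge).
have scale_lt : {in iota 1 n, forall x, trunc_log 2 (n.+1 - x) < e}.
  by move=> x; rewrite mem_iota => xn; apply: trunc_log_lt_pow; lia.
have count_gt : e * wave_threshold j e < count P (iota 1 n) by lia.
have [t _ count_t] := count_fiber_pigeonhole scale_lt count_gt.
exact: wave_in_snoc Pb (IHj _ _ (ltnW n_le) count_t).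
Qed.

Lemma AW_property_pow2 k r e :
  0 < k -> r * wave_threshold k.-1 e < 2 ^ e -> AW_property k r (2 ^ e).
Proof.
move=> k_gt0 r_lt c.
have color_lt : {in iota 1 (2 ^ e), forall x, nat_of_ord (c x) < r} by move=> x _.
have count_gt : r * wave_threshold k.-1 e < count predT (iota 1 (2 ^ e)).
  by rewrite count_predT size_iota.
have [t _ count_t] := count_fiber_pigeonhole color_lt count_gt.
have [w []] := wave_in_of_count (leqnn _) count_t; rewrite prednK // => wave wN wt.
have color_w i : i < k -> c (w i) = t :> nat by move/wt/eqP.
by exists w; split=> // i ik; apply: val_inj; rewrite /= !color_w.
Qed.

Lemma sq_le_pow2 y : 4 <= y -> y ^ 2 <= 2 ^ y.
Proof.
elim: y => [//|y IHy] y_ge; have [y_lt4|y_ge4] := ltnP y 4.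
  by have -> : y = 3 by lia.
have := IHy y_ge4; rewrite (expnS 2 y) -!mulnn; set p := 2 ^ y; nia.
Qed.

Lemma linear_le_pow2 a b : exists y0, forall y, y0 <= y -> a * y + b <= 2 ^ y.
Proof.
exists (a + b + 4) => y y_ge; have := @sq_le_pow2 y ltac:(lia).
rewrite -mulnn; nia.
Qed.

Lemma linear_trunc_log2_le a b :
  exists z0, forall z, z0 <= z -> a * trunc_log 2 z + b <= z.
Proof.
have [y0 y0P] := linear_le_pow2 a b; exists (2 ^ y0) => z z_ge.
have z_gt0 : 0 < z by apply: leq_trans z_ge; rewrite expn_gt0.
apply: leq_trans (trunc_logP (isT : 1 < 2) z_gt0).
by apply/y0P/trunc_log_max.
Qed.

Lemma wave_threshold_pow2 D r a u :
  r < 2 ^ a -> a + D * u + 2 <= 2 ^ u ->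
  r * wave_threshold D (a + D * u) < 2 ^ (a + D * u).
Proof.
move=> r_lt e_le.
apply: (@leq_trans (2 ^ a * wave_threshold D (a + D * u))).
  by rewrite ltn_pmul2r ?wave_threshold_gt0.
rewrite expnD leq_mul2l (leq_trans (wave_threshold_le _ _)) ?orbT //.
have [->|D_gt0] := posnP D; first by rewrite expn0.
by rewrite mulnC expnM leq_exp2r // mulnC.
Qed.

Lemma exists_pow2_scale D : 2 <= D -> exists r0, forall r, r0 <= r ->
  exists e, r * wave_threshold D e < 2 ^ e /\ D`! * 2 ^ e <= r ^ D.
Proof.
move=> D_ge2; have [z0 z0P] := linear_trunc_log2_le D (D`! + 2 * D + 1).
exists (2 ^ z0) => r r_ge; have r_gt0 : 0 < r by apply: leq_trans r_ge; rewrite expn_gt0.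
(* e := z + 1 + D (y + 2) with z = log2 r and y = log2 z: then (e + 2)^D
   <= 2^(D (y + 2)), while e is at most z D - D! since D y + D! + 2D < z. *)
set z := trunc_log 2 r; set y := trunc_log 2 z.
have z_ge : z0 <= z by apply: trunc_log_max.
have small_y : D * y + (D`! + 2 * D + 1) <= z := z0P z z_ge.
have z_gt0 : 0 < z by move: small_y; rewrite addn1 addnS; apply: leq_trans.
have r_lo : 2 ^ z <= r := trunc_logP (isT : 1 < 2) r_gt0.
have r_hi : r < 2 ^ z.+1 := trunc_log_ltn _ (isT : 1 < 2).
have z_hi : z < 2 ^ y.+1 := trunc_log_ltn _ (isT : 1 < 2).
exists (z.+1 + D * y.+2); split.
- apply: wave_threshold_pow2; rewrite // !expnS !mulnS; rewrite expnS in z_hi; lia.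
- apply: (@leq_trans (2 ^ (D`! + (z.+1 + D * y.+2)))).
    by rewrite (expnD 2 D`!) leq_mul2r (ltnW (ltn_expl _ (isT : 1 < 2))) orbT.
  apply: (@leq_trans (2 ^ (z * D))).
    rewrite leq_exp2l // (@leq_trans (z * 2)) ?leq_mul2l ?D_ge2 ?orbT //.
    by rewrite !mulnS; lia.
  by rewrite expnM leq_exp2r ?(ltnW D_ge2).
Qed.

Lemma natr_le_scaled (R : realFieldType) N f M (c : R) :
  (f * N <= M)%N -> (0 < f)%N -> (1 <= c)%R ->
  (N%:R <= c * (M%:R / f%:R) :> R)%R.
Proof.
move=> le_fNM f_gt0 c_ge1; apply: le_trans (ler_peMl _ c_ge1); last first.
  by rewrite divr_ge0 ?ler0n.
by rewrite ler_pdivlMr ?ltr0n // -natrM ler_nat mulnC.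
Qed.

Local Open Scope ring_scope.

Theorem corollary1p5 (R : realType) (k : nat) : (3 <= k)%N ->
  forall eps : R, 0 < eps ->
  exists r0 : nat, forall r : nat, (r0 <= r)%N ->
    AW_le k r ((1 + eps) * (2 ^+ (k - 2) / (k.-1)`!%:R) * r%:R ^+ k.-1).
Proof.
move=> k_ge3 eps eps_gt0.
have [r0 r0P] := @exists_pow2_scale k.-1 ltac:(lia).
exists r0 => r /r0P[e [r_lt fact_le]]; exists (2 ^ e)%N; split.
- by rewrite expn_gt0.
- by apply: AW_property_pow2; first lia.
- have -> : (1 + eps) * (2 ^+ (k - 2) / (k.-1)`!%:R) * r%:R ^+ k.-1
          = ((1 + eps) * 2 ^+ (k - 2)) * ((r ^ k.-1)%:R / (k.-1)`!%:R).
    by rewrite natrX; ring.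
  apply: natr_le_scaled; rewrite ?fact_gt0 //.
  by rewrite mulr_ege1 ?exprn_ege1 ?ler1n // lerDl ltW.
Qed.
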